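(* If $D$ is a diagram of a link $L$, then $\ker\phi_\tau$ is the $\Lambda$-submodule of $M_A^{red}(L)$ generated by the elements $(t-1)\cdot((\gamma_D(a)-\gamma_D(a'))\otimes1)$ with $a,a'\in A(D)$.
   Context: Let $L=K_1\cup\dots\cup K_\mu$ be an oriented classical link with diagram $D$. $A(D)$ is the set of arcs of $D$ and $C(D)$ the set of crossings; $\kappa_D:A(D)\to\{1,\dots,\mu\}$ sends an arc to the index of its component. At a crossing $c$, $a_1$ is the overpassing arc, $a_2$ the underpassing arc on the right of $a_1$ (with respect to the orientation of $a_1$), $a_3$ the underpassing arc on the left of $a_1$. $\Lambda_\mu=\mathbb Z[t_1^{\pm1},\dots,t_\mu^{\pm1}]$, $\Lambda=\mathbb Z[t^{\pm1}]$, $\tau:\Lambda_\mu\to\Lambda$ the ring homomorphism with $\tau(t_i)=t$, making $\Lambda$ a $\Lambda_\mu$-module; $I_\mu$ is the augmentation ideal of $\Lambda_\mu$. $\rho_D:\Lambda_\mu^{C(D)}\to\Lambda_\mu^{A(D)}$ is the $\Lambda_\mu$-linear map with $\rho_D(c)=(1-t_{\kappa_D(a_2)})a_1+t_{\kappa_D(a_1)}a_2-a_3$; $M_A(L)=\operatorname{coker}\rho_D$ with quotient map $\gamma_D$; $\phi_L:M_A(L)\to I_\mu$ is the $\Lambda_\mu$-linear map with $\phi_L(\gamma_D(a))=t_{\kappa_D(a)}-1$. $M_A^{red}(L)=M_A(L)\otimes_{\Lambda_\mu}\Lambda$ and $\phi_\tau=\phi_L\otimes\mathrm{id}_\Lambda:M_A^{red}(L)\to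 I_\mu\otimes_{\Lambda_\mu}\Lambda$. *)

From HB Require Import structures.
From mathcomp Require Import all_boot all_order all_algebra.
Set Implicit Arguments. Unset Strict Implicit. Unset Printing Implicit Defensive.
Import Order.TTheory GRing.Theory Num.Theory.
Local Open Scope ring_scope.

(*   over c = a_1, under_r c = a_2 (right of a_1), under_l c = a_3.    *)
Definition under_adj (Arc Crossing : finType)
  (under_r under_l : Crossing -> Arc) : rel Arc :=
  fun a b => [exists c, ((under_r c == a) && (under_l c == b))
                     || ((under_l c == a) && (under_r c == b))].

Record link_diagram (mu : nat) := LinkDiagram {
  Arc : finType;
  Crossing : finType;
  kappa : Arc -> 'I_mu;
  over : Crossing -> Arc;
  under_r : Crossing -> Arc;
  under_l : Crossing -> Arc;
  under_same_comp : forall c, kappa (under_r c) = kappa (under_l c);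
  comp_nonempty : forall i : 'I_mu, exists a, kappa a = i;
  comp_connected : forall a b, kappa a = kappa b ->
    connect (under_adj under_r under_l) a b
}.

(* Polynomial rings Z[t_0,...,t_{n-1}] as iterated univariate ones.    *)
Fixpoint mpoly (n : nat) : idomainType :=
  match n with
  | 0 => int
  | n'.+1 => {poly (mpoly n')}
  end.

Fixpoint tv (n : nat) (i : nat) : mpoly n :=
  match n return mpoly n with
  | 0 => 0
  | n'.+1 => if i == n' then 'X else (tv n' i)%:P
  end.

Fixpoint evalm (R : comNzRingType) (v : nat -> R) (n : nat) : mpoly n -> R :=
  match n return mpoly n -> R with
  | 0 => fun p => p%:~R
  | n'.+1 => fun p => (map_poly (@evalm R v n') p).[v n']
  end.

Definition aug (mu : nat) (p : mpoly mu) : int := evalm (fun _ => 1) p.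
Definition tau_poly (mu : nat) (p : mpoly mu) : {poly int} := evalm (fun _ => 'X) p.

(* Lambda_mu = Z[t_1^{+-1},...,t_mu^{+-1}] realised as the subring of  *)
(* the fraction field of Z[t_1..t_mu] of elements p / (t_1...t_mu)^k.  *)
Definition FF (mu : nat) := {fraction (mpoly mu)}.
Definition tofr (mu : nat) (p : mpoly mu) : FF mu := @FracField.tofrac (mpoly mu) p.
Definition tF (mu : nat) (i : 'I_mu) : FF mu := tofr (tv mu i).
Definition monoF (mu : nat) : FF mu := tofr (\prod_(i < mu) tv mu i).

Definition in_Lambda (mu : nat) (x : FF mu) : Prop :=
  exists (p : mpoly mu) (k : nat), x * monoF mu ^+ k = tofr p.

Definition in_I (mu : nat) (x : FF mu) : Prop :=
  exists (p : mpoly mu) (k : nat), x * monoF mu ^+ k = tofr p /\ aug p = 0.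

Definition in_kertau (mu : nat) (x : FF mu) : Prop :=
  exists (p : mpoly mu) (k : nat), x * monoF mu ^+ k = tofr p /\ tau_poly p = 0.

Definition in_kertau_I (mu : nat) (x : FF mu) : Prop :=
  exists (N : nat) (j f : 'I_N -> FF mu),
    (forall l, in_kertau (j l) /\ in_I (f l)) /\ x = \sum_(l < N) j l * f l.

Definition rho (mu : nat) (D : link_diagram mu) (c : Crossing D)
  (a : Arc D) : FF mu :=
  (1 - tF (kappa (under_r c))) * ((a == over c)%:R)
  + tF (kappa (over c)) * ((a == under_r c)%:R)
  - ((a == under_l c)%:R).

Definition phi (mu : nat) (D : link_diagram mu) (x : Arc D -> FF mu) : FF mu :=
  \sum_(a : Arc D) x a * (tF (kappa a) - 1).

(* Write elements of Lambda_mu as p / (t_1 ... t_mu)^k with p a polynomial.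
   If x is in the submodule, phi_L(x) is in J I_mu (J = ker tau): phi_L kills
   rho_D(c) because the two underpassing arcs of c lie on one component,
   phi_L(j a) = j (t_kappa(a) - 1), and phi_L((t_i - 1)(b - b')) =
   (t_i - 1)(t_kappa(b) - t_kappa(b')) with t_kappa(b) - t_kappa(b') in J.
   Conversely, if phi_L(x) is in J I_mu, clear denominators.  Applying tau and
   cancelling t - 1 shows that sum_a x_a is in J.  The map psi_i : t_i |-> t,
   t_k |-> 1 (k <> i) sends J I_mu into ((t - 1)^2); applying it, cancelling
   t - 1 and evaluating at 1 shows that the sum y_i of the coefficients of x on
   the arcs of K_i is in I_mu.  At every crossing a_2 - a_3 lies in the
   submodule, so by connectivity of the components all coefficients on K_i can
   be moved to one base arc; finally y_i = j_i + (t_i - 1) z_i with j_i in J,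
   and sum_i (t_i - 1) z_i lies in J because sum_i y_i does. *)
From Pilot Require Import Defs.
From HB Require Import structures.
From mathcomp Require Import all_boot all_order all_algebra.
From mathcomp Require Import ring.
Import Order.TTheory GRing.Theory Num.Theory.
Local Open Scope ring_scope.
Set Implicit Arguments. Unset Strict Implicit.

Fixpoint evalm_rmorph (R : comNzRingType) (v : nat -> R) (n : nat) :
    {rmorphism mpoly n -> R} :=
  match n return {rmorphism mpoly n -> R} with
  | 0 => (intr : {rmorphism int -> R})
  | n'.+1 => (horner_morph (fun p => mulrC (v n') (evalm_rmorph v n' p))
              : {rmorphism {poly mpoly n'} -> R})
  end.

Lemma evalmE (R : comNzRingType) (v : nat -> R) n (p : mpoly n) :
  evalm v p = evalm_rmorph v n p.
Proof.
elim: n p => [//|n IH] p /=.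
by rewrite /horner_morph; congr (_.[_]); apply: eq_map_poly => q; apply: IH.
Qed.

Lemma evalm_is_zmod_morphism (R : comNzRingType) (v : nat -> R) n :
  zmod_morphism (@evalm R v n).
Proof. by move=> p q; rewrite !evalmE rmorphB. Qed.

Lemma evalm_is_monoid_morphism (R : comNzRingType) (v : nat -> R) n :
  monoid_morphism (@evalm R v n).
Proof. by split=> [|p q]; rewrite !evalmE (rmorph1, rmorphM). Qed.

HB.instance Definition _ (R : comNzRingType) (v : nat -> R) n :=
  GRing.isZmodMorphism.Build _ _ (@evalm R v n) (@evalm_is_zmod_morphism R v n).
HB.instance Definition _ (R : comNzRingType) (v : nat -> R) n :=
  GRing.isMonoidMorphism.Build _ _ (@evalm R v n) (@evalm_is_monoid_morphism R v n).
HB.instance Definition _ mu :=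
  GRing.RMorphism.copy (@tau_poly mu) (@evalm _ (fun=> 'X) mu).
HB.instance Definition _ mu :=
  GRing.RMorphism.copy (@aug mu) (@evalm int (fun=> 1) mu).
HB.instance Definition _ mu :=
  GRing.RMorphism.copy (@tofr mu) (@FracField.tofrac (mpoly mu)).

Lemma evalm_tv (R : comNzRingType) (v : nat -> R) n i :
  (i < n)%N -> evalm v (tv n i) = v i.
Proof.
elim: n => [//|n IH] /= lt_in.
case: eqP => [->|ne]; first by rewrite map_polyX hornerX.
by rewrite map_polyC hornerC [LHS]IH //; move: lt_in; rewrite ltnS leq_eqVlt => /predU1P[].
Qed.

Lemma eq_evalm (R : comNzRingType) (v w : nat -> R) n (p : mpoly n) :
  (forall k, (k < n)%N -> v k = w k) -> evalm v p = evalm w p.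
Proof.
elim: n p => [//|n IH] p /= vw.
rewrite vw //; congr (_.[_]); apply: eq_map_poly => q.
by apply: IH => k lt_kn; apply/vw/ltnW.
Qed.

Lemma rmorph_evalm (R S : comNzRingType) (g : {rmorphism R -> S})
    (v : nat -> R) n (p : mpoly n) :
  g (evalm v p) = evalm (g \o v) p.
Proof.
elim: n p => [|n IH] p /=; first by rewrite rmorph_int.
rewrite -horner_map /= -map_poly_comp; congr (_.[_]).
by apply: eq_map_poly => q /=; apply: IH.
Qed.

Lemma Xsub1_neq0 : ('X - 1 : {poly int}) != 0.
Proof. by rewrite -polyC1 polyXsubC_eq0. Qed.

Section LaurentRing.
Variable mu : nat.
Local Notation FF := (FF mu).
Local Notation m := (monoF mu).

Definition mono_poly : mpoly mu := \prod_(i < mu) tv mu i.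

Definition psi (i : 'I_mu) (p : mpoly mu) : {poly int} :=
  evalm (fun k => if k == i then 'X else 1) p.
HB.instance Definition _ i := GRing.RMorphism.copy (psi i) (@evalm _ _ mu).

Lemma tau_tv i : (i < mu)%N -> tau_poly (tv mu i) = 'X.
Proof. exact: evalm_tv. Qed.

Lemma tau_mono_poly : tau_poly mono_poly = 'X ^+ mu.
Proof.
rewrite rmorph_prod (eq_bigr (fun=> 'X)) ?prodr_const ?card_ord // => i _.
exact: tau_tv.
Qed.

Lemma monoF_neq0 : m != 0.
Proof.
rewrite /monoF /tofr tofrac_eq0 -/mono_poly; apply: contraTneq isT => mono0.
have := tau_mono_poly; rewrite mono0 rmorph0 => /eqP.
by rewrite eq_sym expf_eq0 polyX_eq0 andbF.
Qed.

Lemma aug_tau (p : mpoly mu) : aug p = (tau_poly p).[1].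
Proof.
rewrite /tau_poly -horner_evalE rmorph_evalm; apply: eq_evalm => k _.
by rewrite /= horner_evalE hornerX.
Qed.

Lemma aug_tv i : (i < mu)%N -> aug (tv mu i) = 1.
Proof. exact: evalm_tv. Qed.

Lemma psi_tv (i j : 'I_mu) : psi i (tv mu j) = if j == i then 'X else 1.
Proof. exact: evalm_tv. Qed.

Lemma psi_mono_poly i : psi i mono_poly = 'X.
Proof.
rewrite rmorph_prod (bigD1 i) //= psi_tv eqxx big1 ?mulr1 // => k ne_ki.
by rewrite psi_tv (negbTE ne_ki).
Qed.

Lemma psi_horner1 i (p : mpoly mu) : (psi i p).[1] = aug p.
Proof.
rewrite /psi -horner_evalE rmorph_evalm; apply: eq_evalm => k _.
by rewrite /= horner_evalE; case: (k == i); rewrite ?hornerX ?hornerC.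
Qed.

Lemma monoFE : m = tofr mono_poly.
Proof. by []. Qed.

Lemma tofr_inj : injective (@tofr mu).
Proof. by move=> p q /eqP; rewrite tofrac_eq => /eqP. Qed.

Lemma rep_raise (x : FF) (p : mpoly mu) k d :
  x * m ^+ k = tofr p -> x * m ^+ (k + d) = tofr (p * mono_poly ^+ d).
Proof. by move=> xp; rewrite exprD mulrA xp rmorphM rmorphXn. Qed.

Lemma rep_add (x y : FF) (p q : mpoly mu) k l :
    x * m ^+ k = tofr p -> y * m ^+ l = tofr q ->
  (x + y) * m ^+ (k + l) = tofr (p * mono_poly ^+ l + q * mono_poly ^+ k).
Proof.
move=> xp yq; rewrite mulrDl (rep_raise l xp) addnC (rep_raise k yq).
by rewrite rmorphD.
Qed.

Lemma rep_mul (x y : FF) (p q : mpoly mu) k l :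
    x * m ^+ k = tofr p -> y * m ^+ l = tofr q ->
  (x * y) * m ^+ (k + l) = tofr (p * q).
Proof. by move=> xp yq; rewrite exprD mulrACA xp yq rmorphM. Qed.

Lemma in_Lambda_tofr (p : mpoly mu) : in_Lambda (tofr p).
Proof. by exists p, 0%N; rewrite mulr1. Qed.

Lemma in_Lambda0 : in_Lambda (0 : FF).
Proof. by rewrite -(rmorph0 (@tofr mu)); apply: in_Lambda_tofr. Qed.

Lemma in_Lambda1 : in_Lambda (1 : FF).
Proof. by rewrite -(rmorph1 (@tofr mu)); apply: in_Lambda_tofr. Qed.

Lemma in_LambdaD (x y : FF) : in_Lambda x -> in_Lambda y -> in_Lambda (x + y).
Proof. by move=> [p [k xp]] [q [l yq]]; do 2 eexists; apply: rep_add xp yq. Qed.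

Lemma in_LambdaM (x y : FF) : in_Lambda x -> in_Lambda y -> in_Lambda (x * y).
Proof. by move=> [p [k xp]] [q [l yq]]; do 2 eexists; apply: rep_mul xp yq. Qed.

Lemma in_LambdaN (x : FF) : in_Lambda x -> in_Lambda (- x).
Proof. by move=> [p [k xp]]; exists (- p), k; rewrite mulNr xp rmorphN. Qed.

Lemma in_Lambda_nat n : in_Lambda (n%:R : FF).
Proof. by rewrite -(rmorph_nat (@tofr mu)); apply: in_Lambda_tofr. Qed.

Lemma in_Lambda_common (I : finType) (x : I -> FF) :
    (forall i, in_Lambda (x i)) ->
  exists k (p : I -> mpoly mu), forall i, x i * m ^+ k = tofr (p i).
Proof.
move=> Lx; have [kp xkp] : exists kp : I -> nat * mpoly mu,
    forall i, x i * m ^+ (kp i).1 = tofr (kp i).2.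
  apply: (@fin_all_exists _ _ (fun i (kp : nat * mpoly mu) => x i * m ^+ kp.1 = tofr kp.2)).
  by move=> i; have [p [k xp]] := Lx i; exists (k, p).
exists (\max_i (kp i).1), (fun i => (kp i).2 * mono_poly ^+ (\max_i (kp i).1 - (kp i).1)).
move=> i; rewrite -(rep_raise _ (xkp i)) subnKC //.
exact: (@leq_bigmax_cond _ _ (fun i => (kp i).1)).
Qed.

Lemma in_kertau0 : in_kertau (0 : FF).
Proof. by exists 0, 0%N; rewrite mul0r !rmorph0. Qed.

Lemma in_kertauD (x y : FF) : in_kertau x -> in_kertau y -> in_kertau (x + y).
Proof.
move=> [p [k [xp taup]]] [q [l [yq tauq]]]; do 2 eexists; split.
  exact: rep_add xp yq.
by rewrite rmorphD !rmorphM /= taup tauq !mul0r addr0.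
Qed.

Lemma in_kertauMr (x y : FF) : in_kertau x -> in_Lambda y -> in_kertau (x * y).
Proof.
move=> [p [k [xp taup]]] [q [l yq]]; do 2 eexists; split.
  exact: rep_mul xp yq.
by rewrite rmorphM /= taup mul0r.
Qed.

Lemma in_kertauMl (x y : FF) : in_Lambda x -> in_kertau y -> in_kertau (x * y).
Proof. by move=> Lx Jy; rewrite mulrC; apply: in_kertauMr. Qed.

Lemma in_kertauN (x : FF) : in_kertau x -> in_kertau (- x).
Proof. by move=> Jx; rewrite -mulrN1; apply/in_kertauMr/in_LambdaN/in_Lambda1. Qed.

Lemma in_kertauB (x y : FF) : in_kertau x -> in_kertau y -> in_kertau (x - y).
Proof. by move=> Jx Jy; apply/in_kertauD/in_kertauN. Qed.

Lemma in_kertau_sum (I : Type) (r : seq I) (P : pred I) (F : I -> FF) :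
  (forall i, P i -> in_kertau (F i)) -> in_kertau (\sum_(i <- r | P i) F i).
Proof.
move=> JF; elim/big_rec: _ => [|i x Pi Jx]; first exact: in_kertau0.
exact/in_kertauD/Jx/JF.
Qed.

Lemma in_kertau_tFB (i k : 'I_mu) : in_kertau (tF i - tF k).
Proof. by exists (tv mu i - tv mu k), 0%N; rewrite mulr1 !rmorphB /= !tau_tv ?subrr. Qed.

Lemma in_I_mulr_tFB1 (x : FF) (i : 'I_mu) : in_Lambda x -> in_I (x * (tF i - 1)).
Proof.
move=> [p [k xp]]; exists (p * (tv mu i - 1)), k; split.
  by rewrite mulrAC xp rmorphM rmorphB rmorph1.
by rewrite rmorphM rmorphB rmorph1 /= aug_tv // subrr mulr0.
Qed.

Definition lift_poly (i : 'I_mu) (q : {poly int}) : mpoly mu :=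
  @evalm _ (fun=> tv mu i) 1 q.

Lemma tau_lift_poly i q : tau_poly (lift_poly i q) = q.
Proof.
rewrite [LHS]rmorph_evalm (@eq_evalm _ _ (fun=> 'X)) => [|k _]; last exact: tau_tv.
rewrite /= -[RHS]comp_polyXr /comp_poly; congr (_.[_]); apply: eq_map_poly => c.
by rewrite /= -[in RHS](intz c) (rmorph_int polyC).
Qed.

Lemma in_I_decomp (i : 'I_mu) (y : FF) :
  in_I y -> exists2 z, in_Lambda z & in_kertau (y - (tF i - 1) * z).
Proof.
move=> [p [k [yp augp]]].
have [q tau_p] : exists q, tau_poly p = q * ('X - 1).
  by apply/factor_theorem/rootP; rewrite -aug_tau.
have mk_neq0 : m ^+ k != 0 by rewrite expf_neq0 // monoF_neq0.
exists (tofr (lift_poly i q) / m ^+ k).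
  by exists (lift_poly i q), k; rewrite divfK.
exists (p - (tv mu i - 1) * lift_poly i q), k; split.
  by rewrite mulrBl -mulrA divfK // yp !rmorphB rmorphM rmorphB rmorph1.
by rewrite rmorphB rmorphM rmorphB rmorph1 /= tau_tv // tau_lift_poly tau_p mulrC subrr.
Qed.

Lemma in_kertau_I0 : in_kertau_I (0 : FF).
Proof. by exists 0%N, (fun=> 0), (fun=> 0); split; [case | rewrite big_ord0]. Qed.

Lemma in_kertau_I_mul (x y : FF) : in_kertau x -> in_I y -> in_kertau_I (x * y).
Proof. by move=> Jx Iy; exists 1%N, (fun=> x), (fun=> y); rewrite big_ord1. Qed.

Lemma in_kertau_ID (x y : FF) :
  in_kertau_I x -> in_kertau_I y -> in_kertau_I (x + y).
Proof.
move=> [N [j [f [JIjf ->]]]] [N' [j' [f' [JIjf' ->]]]].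
pose glue (T : Type) (g : 'I_N -> T) (g' : 'I_N' -> T) l :=
  match split l with inl a => g a | inr b => g' b end.
exists (N + N')%N, (glue _ j j'), (glue _ f f'); split.
  by move=> l; rewrite /glue; case: split.
rewrite big_split_ord; congr (_ + _); apply: eq_bigr => l _.
  by rewrite /glue (unsplitK (inl l : 'I_N + 'I_N')).
by rewrite /glue (unsplitK (inr l : 'I_N + 'I_N')).
Qed.

Lemma in_kertau_I_sum (I : Type) (r : seq I) (P : pred I) (F : I -> FF) :
  (forall i, P i -> in_kertau_I (F i)) -> in_kertau_I (\sum_(i <- r | P i) F i).
Proof.
move=> JIF; elim/big_rec: _ => [|i x Pi JIx]; first exact: in_kertau_I0.
exact/in_kertau_ID/JIx/JIF.
Qed.

(* Satisfied by numerators of elements of [J * I_mu], as [psi i] maps both [J]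
   and [I_mu] into [('X - 1)]. *)
Definition kertau_I_poly (p : mpoly mu) : Prop :=
  tau_poly p = 0 /\ forall i, exists r, psi i p = r * ('X - 1) ^+ 2.

Lemma kertau_I_poly0 : kertau_I_poly 0.
Proof. by split=> [|i]; [rewrite rmorph0 | exists 0; rewrite rmorph0 mul0r]. Qed.

Lemma kertau_I_polyD p q :
  kertau_I_poly p -> kertau_I_poly q -> kertau_I_poly (p + q).
Proof.
move=> [taup psip] [tauq psiq]; split=> [|i]; first by rewrite rmorphD /= taup tauq addr0.
have [[r pr] [r' qr']] := (psip i, psiq i).
by exists (r + r'); rewrite rmorphD /= pr qr' mulrDl.
Qed.

Lemma kertau_I_polyMr p q : kertau_I_poly p -> kertau_I_poly (p * q).
Proof.
move=> [taup psip]; split=> [|i]; first by rewrite rmorphM /= taup mul0r.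
by have [r pr] := psip i; exists (r * psi i q); rewrite rmorphM /= pr mulrAC.
Qed.

Lemma kertau_I_poly_mul p q :
  tau_poly p = 0 -> aug q = 0 -> kertau_I_poly (p * q).
Proof.
move=> taup augq; split=> [|i]; first by rewrite rmorphM /= taup mul0r.
have root1 r : aug r = 0 -> exists s, psi i r = s * ('X - 1).
  by move=> augr; apply/factor_theorem/rootP; rewrite psi_horner1 augr.
have augp : aug p = 0 by rewrite aug_tau taup horner0.
have [[s ps] [s' qs']] := (root1 p augp, root1 q augq).
by exists (s * s'); rewrite rmorphM /= ps qs' mulrACA expr2.
Qed.

Lemma in_kertau_I_rep (z : FF) :
  in_kertau_I z -> exists k p, z * m ^+ k = tofr p /\ kertau_I_poly p.
Proof.
move=> [N [j [f [JIjf ->]]]].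
apply: (big_ind (fun z => exists k p, z * m ^+ k = tofr p /\ kertau_I_poly p)) => [|x y|l _].
- by exists 0%N, 0; rewrite mul0r rmorph0; split; last exact: kertau_I_poly0.
- move=> [k [p [xp JIp]]] [l [q [yq JIq]]]; do 2 eexists; split.
    exact: rep_add xp yq.
  by apply: kertau_I_polyD; apply: kertau_I_polyMr.
have [[p [k [jp taup]]] [q [k' [fq augq]]]] := JIjf l.
by do 2 eexists; split; [apply: rep_mul jp fq | apply: kertau_I_poly_mul].
Qed.
End LaurentRing.

Lemma sum_natr_eq_mull (R : pzSemiRingType) (I : finType) (i0 : I) (F : I -> R) :
  \sum_i (i == i0)%:R * F i = F i0.
Proof. by rewrite (bigD1 i0) //= eqxx mul1r big1 ?addr0 // => i /negbTE->; rewrite mul0r. Qed.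

Lemma sum_natr_eq_mulr (R : pzSemiRingType) (I : finType) (i0 : I) (F : I -> R) :
  \sum_i F i * (i == i0)%:R = F i0.
Proof. by rewrite (bigD1 i0) //= eqxx mulr1 big1 ?addr0 // => i /negbTE->; rewrite mulr0. Qed.

Section Diagram.
Variables (mu : nat) (D : link_diagram mu).
Local Notation FF := (FF mu).

Definition delta (b : Arc D) (a : Arc D) : FF := (a == b)%:R.

Definition kernel_span_comb (r : Crossing D -> FF) (j : Arc D -> FF)
    (s : 'I_mu -> Arc D -> Arc D -> FF) (a : Arc D) : FF :=
  \sum_(c : Crossing D) r c * rho c a + j a
  + \sum_(i < mu) \sum_(b : Arc D) \sum_(b' : Arc D)
      s i b b' * (tF i - 1) * ((a == b)%:R - (a == b')%:R).

Definition in_kernel_span (x : Arc D -> FF) : Prop :=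
  exists r j s, [/\ forall c, in_Lambda (r c), forall a, in_kertau (j a),
    forall i b b', in_Lambda (s i b b') & forall a, x a = kernel_span_comb r j s a].

Lemma eq_in_kernel_span x y :
  (forall a, x a = y a) -> in_kernel_span x -> in_kernel_span y.
Proof. by move=> xy [r [j [s [Lr Jj Ls xE]]]]; exists r, j, s; split=> // a; rewrite -xy. Qed.

Lemma in_kernel_spanD x y :
  in_kernel_span x -> in_kernel_span y -> in_kernel_span (fun a => x a + y a).
Proof.
move=> [r [j [s [Lr Jj Ls xE]]]] [r' [j' [s' [Lr' Jj' Ls' yE]]]].
exists (fun c => r c + r' c), (fun a => j a + j' a), (fun i b b' => s i b b' + s' i b b').
split=> [c|a|i b b'|a]; [exact: in_LambdaD | exact: in_kertauD | exact: in_LambdaD |].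
rewrite xE yE /kernel_span_comb /=; under [in RHS]eq_bigr do rewrite mulrDl.
under [X in _ = _ + X]eq_bigr do under eq_bigr do under eq_bigr do rewrite !mulrDl.
under [X in _ = _ + X]eq_bigr do under eq_bigr do rewrite big_split.
under [X in _ = _ + X]eq_bigr do rewrite big_split.
rewrite !big_split /=; ring.
Qed.

Lemma in_kernel_spanZ (l : FF) x :
  in_Lambda l -> in_kernel_span x -> in_kernel_span (fun a => l * x a).
Proof.
move=> Ll [r [j [s [Lr Jj Ls xE]]]].
exists (fun c => l * r c), (fun a => l * j a), (fun i b b' => l * s i b b').
split=> [c|a|i b b'|a]; [exact: in_LambdaM | exact: in_kertauMl | exact: in_LambdaM |].
rewrite xE /kernel_span_comb /= !mulrDr; congr (_ + _ + _).
  by rewrite mulr_sumr; apply: eq_bigr => c _; rewrite mulrA.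
rewrite mulr_sumr; apply: eq_bigr => i _; rewrite mulr_sumr; apply: eq_bigr => b _.
by rewrite mulr_sumr; apply: eq_bigr => b' _; rewrite !mulrA.
Qed.

Lemma kernel_span_comb_gen0 r j a :
  kernel_span_comb r j (fun _ _ _ => 0) a = \sum_c r c * rho c a + j a.
Proof.
rewrite /kernel_span_comb [X in _ + X]big1 ?addr0 // => i _.
by rewrite big1 // => b _; rewrite big1 // => b' _; rewrite !mul0r.
Qed.

Lemma in_kernel_span0 : in_kernel_span (fun=> 0).
Proof.
exists (fun=> 0), (fun=> 0), (fun _ _ _ => 0); split=> [c|a|i b b'|a].
- exact: in_Lambda0.
- exact: in_kertau0.
- exact: in_Lambda0.
by rewrite kernel_span_comb_gen0 big1 ?addr0 // => c _; rewrite mul0r.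
Qed.

Lemma in_kernel_span_sum (I : finType) (F : I -> Arc D -> FF) :
  (forall i, in_kernel_span (F i)) -> in_kernel_span (fun a => \sum_i F i a).
Proof.
move=> spanF; elim: (index_enum I) => [|i r IHr].
  by apply: eq_in_kernel_span in_kernel_span0 => a; rewrite big_nil.
by apply: eq_in_kernel_span (in_kernel_spanD (spanF i) IHr) => a; rewrite big_cons.
Qed.

Lemma in_kernel_span_rho c : in_kernel_span (rho c).
Proof.
exists (fun c' => (c' == c)%:R), (fun=> 0), (fun _ _ _ => 0); split=> [c'|a|i b b'|a].
- exact: in_Lambda_nat.
- exact: in_kertau0.
- exact: in_Lambda0.
by rewrite kernel_span_comb_gen0 sum_natr_eq_mull addr0.
Qed.

Lemma in_kernel_span_kertau (j0 : FF) b :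
  in_kertau j0 -> in_kernel_span (fun a => j0 * delta b a).
Proof.
move=> Jj0; exists (fun=> 0), (fun a => j0 * delta b a), (fun _ _ _ => 0).
split=> [c|a|i b1 b2|a].
- exact: in_Lambda0.
- exact/in_kertauMr/in_Lambda_nat.
- exact: in_Lambda0.
by rewrite kernel_span_comb_gen0 big1 ?add0r // => c _; rewrite mul0r.
Qed.

Lemma in_kernel_span_gen (i : 'I_mu) b b' :
  in_kernel_span (fun a => (tF i - 1) * (delta b a - delta b' a)).
Proof.
exists (fun=> 0), (fun=> 0), (fun i' c c' => (c' == b')%:R * ((c == b)%:R * (i' == i)%:R)).
split=> [c|a|i' c c'|a].
- exact: in_Lambda0.
- exact: in_kertau0.
- by apply: in_LambdaM; [|apply: in_LambdaM]; apply: in_Lambda_nat.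
rewrite /kernel_span_comb big1 ?add0r ?addr0 => [|c _]; last by rewrite mul0r.
under eq_bigr do under eq_bigr do under eq_bigr do rewrite -!mulrA.
under eq_bigr do under eq_bigr do rewrite sum_natr_eq_mull.
under eq_bigr do rewrite sum_natr_eq_mull.
by rewrite sum_natr_eq_mull.
Qed.

Lemma in_kernel_span_under c :
  in_kernel_span (fun a => delta (under_r c) a - delta (under_l c) a).
Proof.
pose k1 := kappa (Defs.over c); pose k2 := kappa (under_r c).
(* [a2 - a3 = rho c + (t_k2 - 1) (a1 - a2) + (t_k2 - t_k1) a2] *)
have := in_kernel_spanD (in_kernel_spanD (in_kernel_span_rho c)
  (in_kernel_span_gen k2 (Defs.over c) (under_r c)))
  (in_kernel_span_kertau (under_r c) (in_kertau_tFB k2 k1)).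
by apply: eq_in_kernel_span => a; rewrite /rho /delta; ring.
Qed.

Lemma in_kernel_span_same_comp b b' :
  kappa b = kappa b' -> in_kernel_span (fun a => delta b a - delta b' a).
Proof.
move=> /comp_connected /connectP[p]; elim: p b => [|b1 p IHp] b /=.
  by move=> _ ->; apply: eq_in_kernel_span in_kernel_span0 => a; rewrite subrr.
move=> /andP[/existsP[c /orP[] /andP[/eqP<- /eqP<-]] pathp] lastp.
  apply: eq_in_kernel_span (in_kernel_spanD (in_kernel_span_under c) (IHp _ pathp lastp)).
  by move=> a; rewrite addrA subrK.
have := in_kernel_spanD (in_kernel_spanZ (in_LambdaN (in_Lambda1 mu)) (in_kernel_span_under c))
  (IHp _ pathp lastp).
by apply: eq_in_kernel_span => a; ring.
Qed.

Lemma eq_phi (x y : Arc D -> FF) : (forall a, x a = y a) -> phi x = phi y.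
Proof. by move=> xy; apply: eq_bigr => a _; rewrite xy. Qed.

Lemma phiD (x y : Arc D -> FF) : phi (fun a => x a + y a) = phi x + phi y.
Proof. by rewrite /phi -big_split; apply: eq_bigr => a _; rewrite mulrDl. Qed.

Lemma phiB (x y : Arc D -> FF) : phi (fun a => x a - y a) = phi x - phi y.
Proof. by rewrite /phi -sumrB; apply: eq_bigr => a _; rewrite mulrBl. Qed.

Lemma phiZ (l : FF) (x : Arc D -> FF) : phi (fun a => l * x a) = l * phi x.
Proof. by rewrite /phi mulr_sumr; apply: eq_bigr => a _; rewrite mulrA. Qed.

Lemma phi_sum (I : Type) (r : seq I) (P : pred I) (F : I -> Arc D -> FF) :
  phi (fun a => \sum_(i <- r | P i) F i a) = \sum_(i <- r | P i) phi (F i).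
Proof. by rewrite /phi; under eq_bigr do rewrite mulr_suml; apply: exchange_big. Qed.

Lemma phi_delta (b : Arc D) : phi (delta b) = tF (kappa b) - 1.
Proof. exact: sum_natr_eq_mull. Qed.

Lemma phi_rho (c : Crossing D) : phi (rho c) = 0.
Proof.
rewrite (@eq_phi _ (fun a => (1 - tF (kappa (under_r c))) * delta (Defs.over c) a
  + tF (kappa (Defs.over c)) * delta (under_r c) a - delta (under_l c) a)) //.
by rewrite phiB phiD !phiZ !phi_delta (under_same_comp c); ring.
Qed.

Lemma in_kertau_I_phi_of_span x : in_kernel_span x -> in_kertau_I (phi x).
Proof.
move=> [r [j [s [Lr Jj Ls xE]]]]; rewrite (eq_phi xE) /kernel_span_comb !phiD !phi_sum.
apply: in_kertau_ID; first apply: in_kertau_ID.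
- by rewrite big1 => [|c _]; [exact: in_kertau_I0 | rewrite phiZ phi_rho mulr0].
- apply: in_kertau_I_sum => a _; rewrite -[_ - 1]mul1r.
  exact/in_kertau_I_mul/in_I_mulr_tFB1/in_Lambda1.
apply: in_kertau_I_sum => i _; rewrite phi_sum; apply: in_kertau_I_sum => b _.
rewrite phi_sum; apply: in_kertau_I_sum => b' _.
rewrite phiZ (phiB (delta b) (delta b')) !phi_delta mulrC.
have -> : tF (kappa b) - 1 - (tF (kappa b') - 1) = tF (kappa b) - tF (kappa b') by ring.
exact/in_kertau_I_mul/in_I_mulr_tFB1/Ls/in_kertau_tFB.
Qed.

Definition phi_poly (X : Arc D -> mpoly mu) k : mpoly mu :=
  \sum_a X a * (tv mu (kappa a) - 1) * mono_poly mu ^+ k.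

Lemma sum_tau_eq0 (X : Arc D -> mpoly mu) k :
    tau_poly (phi_poly X k) = 0 ->
  \sum_a tau_poly (X a) = 0.
Proof.
rewrite rmorph_sum /=.
under eq_bigr do rewrite !rmorphM rmorphB rmorph1 rmorphXn /= tau_tv // tau_mono_poly.
rewrite -!mulr_suml => /eqP.
by rewrite !mulf_eq0 (negbTE Xsub1_neq0) !expf_eq0 polyX_eq0 !andbF !orbF => /eqP.
Qed.

Lemma sum_aug_eq0 (X : Arc D -> mpoly mu) k (i : 'I_mu) :
    (exists r, psi i (phi_poly X k) = r * ('X - 1) ^+ 2) ->
  \sum_(a | kappa a == i) aug (X a) = 0.
Proof.
have -> : psi i (phi_poly X k) = (\sum_(a | kappa a == i) psi i (X a)) * 'X ^+ k * ('X - 1).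
  rewrite rmorph_sum !mulr_suml [RHS]big_mkcond; apply: eq_bigr => a _ /=.
  rewrite !rmorphM rmorphB rmorph1 rmorphXn /= psi_tv psi_mono_poly.
  by case: eqP => _; rewrite ?subrr ?mulr0 ?mul0r // mulrAC.
move=> [r]; rewrite expr2 mulrA => /(mulIf Xsub1_neq0) /(congr1 (horner^~ 1)).
rewrite !hornerE horner_sum expr1n mulr1 => sum_psi1.
by rewrite -[RHS]sum_psi1; apply: eq_bigr => a _; rewrite psi_horner1.
Qed.

Lemma component_sums_of_phi (x : Arc D -> FF) :
    (forall a, in_Lambda (x a)) -> in_kertau_I (phi x) ->
  in_kertau (\sum_a x a) /\ forall i, in_I (\sum_(a | kappa a == i) x a).
Proof.
move=> Lx /in_kertau_I_rep[k [p [phip JIp]]].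
have [c [X xX]] := in_Lambda_common Lx.
have phiX : phi_poly X k = p * mono_poly mu ^+ c.
  apply: tofr_inj; rewrite rmorphM rmorphXn /= -phip -monoFE rmorph_sum /phi !mulr_suml.
  apply: eq_bigr => a _; rewrite !rmorphM rmorphB rmorph1 rmorphXn /= -xX -monoFE.
  by rewrite -/(tF _); ring.
have JIphiX := kertau_I_polyMr (mono_poly mu ^+ c) JIp; rewrite -phiX in JIphiX.
have [tauX psiX] := JIphiX.
split=> [|i].
  exists (\sum_a X a), c; split; last by rewrite rmorph_sum; apply: sum_tau_eq0 tauX.
  by rewrite mulr_suml rmorph_sum; apply: eq_bigr.
exists (\sum_(a | kappa a == i) X a), c; split.
  by rewrite mulr_suml rmorph_sum; apply: eq_bigr.
by rewrite rmorph_sum; apply: sum_aug_eq0 (psiX i).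
Qed.

Lemma in_kernel_span_collapse (base : 'I_mu -> Arc D) (x : Arc D -> FF) :
    (forall i, kappa (base i) = i) -> (forall a, in_Lambda (x a)) ->
  in_kernel_span (fun a => x a - \sum_i (\sum_(b | kappa b == i) x b) * delta (base i) a).
Proof.
move=> kappa_base Lx; have := in_kernel_span_sum (fun b => in_kernel_spanZ (Lx b)
  (in_kernel_span_same_comp (esym (kappa_base (kappa b))))).
apply: eq_in_kernel_span => a /=.
under eq_bigr do rewrite mulrBr; rewrite sumrB; congr (_ - _).
  by rewrite /delta; under eq_bigr do rewrite eq_sym; apply: sum_natr_eq_mulr.
rewrite (partition_big (fun b => kappa b) xpredT) //=; apply: eq_bigr => i _.
by rewrite mulr_suml; apply: eq_bigr => b /eqP <-.
Qed.

Lemma in_kernel_span_base (base : 'I_mu -> Arc D) (y : 'I_mu -> FF) :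
    in_kertau (\sum_i y i) -> (forall i, in_I (y i)) ->
  in_kernel_span (fun a => \sum_i y i * delta (base i) a).
Proof.
move=> Jsum Iy; have [i0 _ | no_comp] := pickP (@predT 'I_mu); last first.
  by apply: eq_in_kernel_span in_kernel_span0 => a; rewrite big1 // => i; have := no_comp i.
have [z zE] : exists z : 'I_mu -> FF,
    forall i, in_Lambda (z i) /\ in_kertau (y i - (tF i - 1) * z i).
  apply: (@fin_all_exists _ _ (fun i z => in_Lambda z /\ in_kertau (y i - (tF i - 1) * z))).
  by move=> i; have [z Lz Jz] := in_I_decomp i (Iy i); exists z.
(* [y_i = j_i + (t_i - 1) z_i] with [j_i] in [J]; moving the terms [(t_i - 1) z_i]
   to the arc [base i0] costs generators, and what they leave there lies in [J]. *)
have Jw : in_kertau (\sum_i (tF i - 1) * z i).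
  rewrite -[X in in_kertau X](subKr (\sum_i y i)) -sumrB.
  by apply: in_kertauB Jsum _; apply: in_kertau_sum => i _; apply: (zE i).2.
have := in_kernel_spanD (in_kernel_spanD
  (in_kernel_span_sum (fun i => in_kernel_span_kertau (base i) (zE i).2))
  (in_kernel_span_sum (fun i =>
     in_kernel_spanZ (zE i).1 (in_kernel_span_gen i (base i) (base i0)))))
  (in_kernel_span_kertau (base i0) Jw).
apply: eq_in_kernel_span => a /=; rewrite mulr_suml -!big_split /=.
by apply: eq_bigr => i _; ring.
Qed.

Lemma in_kernel_span_of_phi (x : Arc D -> FF) :
  (forall a, in_Lambda (x a)) -> in_kertau_I (phi x) -> in_kernel_span x.
Proof.
move=> Lx /(component_sums_of_phi Lx)[Jsum Icomp].
have [base kappa_base] := fin_all_exists (@comp_nonempty _ D).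
rewrite (partition_big (fun b => kappa b) xpredT) //= in Jsum.
have := in_kernel_spanD (in_kernel_span_collapse kappa_base Lx)
  (in_kernel_span_base base Jsum Icomp).
by apply: eq_in_kernel_span => a; rewrite subrK.
Qed.

End Diagram.

Unset Implicit Arguments.

Theorem proposition8 (mu : nat) (D : link_diagram mu) (x : Arc D -> FF mu) :
  (forall a, in_Lambda (x a)) ->
  (in_kertau_I (phi x) <->
   exists (r : Crossing D -> FF mu) (j : Arc D -> FF mu)
          (s : 'I_mu -> Arc D -> Arc D -> FF mu),
     [/\ forall c, in_Lambda (r c),
         forall a, in_kertau (j a),
         forall i b b', in_Lambda (s i b b') &
         forall a, x a = \sum_(c : Crossing D) r c * rho c a + j a
                       + \sum_(i < mu) \sum_(b : Arc D) \sum_(b' : Arc D)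
                           s i b b' * (tF i - 1)
                             * ((a == b)%:R - (a == b')%:R)]).
Proof.
by move=> Lx; split; [apply: in_kernel_span_of_phi | apply: in_kertau_I_phi_of_span].
Qed.
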